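(* For every $\varepsilon>0$ there exist a binary sequence $\boldsymbol{a}=(a_n)_{n=1}^\infty\in\{0,1\}^{\mathbb{N}}$ and a sequence $(N_m)_{m=1}^\infty$ of natural numbers such that: (i) $\liminf_{n\to\infty}\frac{1}{n}\sum_{j=1}^n a_j\geq 1-\varepsilon$; and (ii) for all $m\in\mathbb{N}$ and $j\in\mathbb{N}$, the finite sequence $(a_j,a_{j+1},\ldots,a_{j+N_m-1})$ contains $m$ consecutive zeros. *)

From Stdlib Require Import Reals.
From Coquelicot Require Import Coquelicot.
Open Scope R_scope.

(* 1-indexed binary sequence a : nat -> bool; only a 1, a 2, ... matter. *)
Definition b2R (b : bool) : R := if b then 1 else 0.

(* (1/n) * sum_{j=1}^n a_j, for n >= 1 (value at n = 0 is irrelevant to liminf). *)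
Definition avg (a : nat -> bool) (n : nat) : R :=
  sum_n_m (fun j => b2R (a j)) 1 n / INR n.

Definition has_zero_run (a : nat -> bool) (j N m : nat) : Prop :=
  exists k, (j <= k)%nat /\ (k + m <= j + N)%nat /\
    forall i, (k <= i < k + m)%nat -> a i = false.

From Stdlib Require Import Reals.
From Coquelicot Require Import Coquelicot.
From Stdlib Require Import Lia Lra List Bool.

(* For every m >= 1 place a run of m zeros at the end of each period of length
   P_m = K m 2^m, and let a_j = 0 exactly when j lies in one of these runs.
   Any window of length 2 P_m then contains a whole run of m zeros, while the
   runs of length m occupy a fraction at most m / P_m = 1 / (K 2^m) of every
   initial segment; summing over m, at most a fraction 1/K of the first n
   terms vanish. *)

Fixpoint ncount (f : nat -> bool) (n : nat) : nat :=
  match n with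
  | O => O
  | S p => ncount f p + (if f p then 1 else 0)
  end.

Lemma ncount_ext (f g : nat -> bool) (n : nat) :
  (forall i, (i < n)%nat -> f i = g i) -> ncount f n = ncount g n.
Proof.
  induction n as [|n IH]; intros Hfg; simpl; auto.
  rewrite IH by (intros; apply Hfg; lia). rewrite Hfg by lia. reflexivity.
Qed.

Lemma ncount_negb (f : nat -> bool) (n : nat) :
  (ncount f n + ncount (fun j => negb (f j)) n)%nat = n.
Proof. induction n as [|n IH]; simpl; [lia|]. destruct (f n); simpl; lia. Qed.

Lemma ncount_orb (f g : nat -> bool) (n : nat) :
  (ncount (fun j => f j || g j) n <= ncount f n + ncount g n)%nat.
Proof.
  induction n as [|n IH]; simpl; [lia|].
  destruct (f n), (g n); simpl; lia.
Qed.

Lemma ncount_existsb {A : Type} (g : A -> nat -> bool) (l : list A) (n : nat) :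
  (ncount (fun j => existsb (fun x => g x j) l) n
   <= list_sum (map (fun x => ncount (g x) n) l))%nat.
Proof.
  induction l as [|x l IH]; simpl.
  - induction n; simpl; lia.
  - pose proof (ncount_orb (g x) (fun j => existsb (fun x => g x j) l) n). lia.
Qed.

Lemma sum_n_m_b2R (f : nat -> bool) (n : nat) :
  sum_n_m (fun j => b2R (f j)) 0 n = INR (ncount f (S n)).
Proof.
  induction n as [|n IH].
  - rewrite sum_n_n. simpl. destruct (f 0%nat); simpl; lra.
  - rewrite sum_n_Sm, IH by lia. simpl ncount. rewrite (plus_INR (ncount f (S n))).
    unfold b2R. destruct (f (S n)); reflexivity.
Qed.

Section Residues.

Variables P m : nat.
Hypothesis m_le_P : (m <= P)%nat.

Lemma ncount_mod_ge (q r : nat) : (r <= P)%nat ->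
  ncount (fun j => P - m <=? j mod P) (q * P + r) = (q * m + (r - (P - m)))%nat.
Proof.
  revert r; induction q as [|q IHq]; intros r Hr; induction r as [|r IHr].
  - reflexivity.
  - rewrite Nat.mul_0_l, Nat.add_0_l in *. simpl ncount.
    rewrite IHr, Nat.mod_small by lia.
    destruct (Nat.leb_spec (P - m) r); lia.
  - replace (S q * P + 0)%nat with (q * P + P)%nat by lia.
    rewrite IHq by lia. lia.
  - replace (S q * P + S r)%nat with (S (S q * P + r)) by lia. cbn [ncount].
    rewrite IHr by lia.
    replace (S q * P + r)%nat with (r + S q * P)%nat by lia.
    rewrite Nat.Div0.mod_add, Nat.mod_small by lia.
    destruct (Nat.leb_spec (P - m) r); lia.
Qed.

Lemma ncount_mod_ge_le (n : nat) :
  (ncount (fun j => P - m <=? j mod P) n * P <= m * n)%nat.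
Proof.
  destruct (Nat.eq_dec P 0) as [->|HP]; [lia|].
  pose proof (Nat.div_mod_eq n P). pose proof (Nat.mod_upper_bound n P HP).
  pose proof (ncount_mod_ge (n / P) (n mod P) ltac:(lia)) as Hc.
  replace (n / P * P + n mod P)%nat with n in Hc by lia. rewrite Hc.
  destruct (Nat.le_gt_cases (n mod P) (P - m)).
  - replace (n mod P - (P - m))%nat with 0%nat by lia. nia.
  - replace (n mod P - (P - m))%nat with (n mod P + m - P)%nat by lia. nia.
Qed.

End Residues.

Lemma list_sum_geometric (K n M : nat) (c : nat -> nat) :
  (forall m, (1 <= m)%nat -> (K * 2 ^ m * c m <= n)%nat) ->
  (K * list_sum (map c (seq 1 M)) <= n)%nat.
Proof.
  intros Hc.
  enough (H : (2 ^ M * (K * list_sum (map c (seq 1 M))) + n <= 2 ^ M * n)%nat).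
  { pose proof (Nat.pow_nonzero 2 M ltac:(lia)). nia. }
  induction M as [|M IH]; [simpl; lia|].
  rewrite seq_S, map_app, list_sum_app. simpl.
  pose proof (Hc (S M) ltac:(lia)). simpl in *. nia.
Qed.

Section Construction.

Variable K : nat.
Hypothesis K_pos : (1 <= K)%nat.

Definition period (m : nat) : nat := K * m * 2 ^ m.

Definition in_run (m j : nat) : bool := period m - m <=? j mod period m.

(* Only m <= j can put a zero at position j (in_run_le), so the search is finite. *)
Definition run_seq (j : nat) : bool :=
  negb (existsb (fun m => in_run m j) (seq 1 j)).

Lemma period_ge (m : nat) : (2 * m <= period m)%nat.
Proof.
  unfold period. destruct m as [|m]; [lia|].
  pose proof (Nat.pow_le_mono_r 2 1 (S m) ltac:(lia) ltac:(lia)). simpl in *. nia.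
Qed.

Lemma in_run_le (m j : nat) : in_run m j = true -> (m <= j)%nat.
Proof.
  unfold in_run. intros Hj. apply Nat.leb_le in Hj.
  pose proof (period_ge m). pose proof (Nat.Div0.mod_le j (period m)). lia.
Qed.

Lemma negb_run_seq (M j : nat) : (j <= M)%nat ->
  negb (run_seq j) = existsb (fun m => in_run m j) (seq 1 M).
Proof.
  intros HjM. unfold run_seq. rewrite negb_involutive.
  apply eq_true_iff_eq. rewrite !existsb_exists.
  split; intros [m [Hm Hr]]; exists m; split; auto; rewrite in_seq in *;
    pose proof (in_run_le m j Hr); lia.
Qed.

Lemma run_seq_zeros (n : nat) :
  (K * ncount (fun j => negb (run_seq j)) n <= n)%nat.
Proof.
  rewrite (ncount_ext _ (fun j => existsb (fun m => in_run m j) (seq 1 n)))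
    by (intros; apply negb_run_seq; lia).
  pose proof (ncount_existsb in_run (seq 1 n) n).
  enough (K * list_sum (map (fun m => ncount (in_run m) n) (seq 1 n)) <= n)%nat by nia.
  apply list_sum_geometric. intros m Hm.
  assert (Hm_le : (m <= period m)%nat) by (pose proof (period_ge m); lia).
  pose proof (ncount_mod_ge_le (period m) m Hm_le n) as Hc.
  unfold in_run, period in *. nia.
Qed.

Lemma run_seq_has_zero_run (m j : nat) : (1 <= m)%nat ->
  has_zero_run run_seq j (2 * period m) m.
Proof.
  intros Hm. set (P := period m). pose proof (period_ge m) as HP.
  assert (Hj : (j < (j / P + 1) * P)%nat).
  { pose proof (Nat.div_mod_eq j P). pose proof (Nat.mod_upper_bound j P ltac:(lia)). nia. }
  assert (Hj' : ((j / P) * P <= j)%nat).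
  { pose proof (Nat.div_mod_eq j P). nia. }
  exists ((j / P + 2) * P - m)%nat. repeat split; [nia|nia|].
  intros i Hi. apply negb_true_iff. rewrite (negb_run_seq i) by lia.
  apply existsb_exists. exists m. split; [apply in_seq; nia|].
  unfold in_run. fold P. apply Nat.leb_le.
  replace i with (i - (j / P + 1) * P + (j / P + 1) * P)%nat by nia.
  rewrite Nat.Div0.mod_add, Nat.mod_small by nia. nia.
Qed.

Lemma run_seq_avg (eps : R) (n : nat) : 2 < INR K * eps -> (1 <= n)%nat ->
  1 - eps <= avg run_seq n.
Proof.
  intros HK Hn. unfold avg.
  assert (Hsum : sum_n_m (fun j => b2R (run_seq j)) 1 n
                 = INR (ncount run_seq (S n)) - 1).
  { rewrite <- sum_n_m_b2R, (sum_Sn_m _ 0 n) by lia. simpl. unfold plus. simpl. lra. }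
  (* The zero count covers a_0, ..., a_n, i.e. n + 1 <= 2 n terms: hence the 2. *)
  pose proof (ncount_negb run_seq (S n)) as Hones.
  pose proof (run_seq_zeros (S n)) as Hzeros.
  apply (f_equal INR) in Hones. apply le_INR in Hzeros.
  rewrite plus_INR in Hones. rewrite mult_INR in Hzeros. rewrite S_INR in *.
  apply le_INR in Hn. simpl INR in Hn.
  rewrite Hsum. apply (Rmult_le_reg_r (INR n)); [lra|].
  unfold Rdiv. rewrite Rmult_assoc, Rinv_l, Rmult_1_r by lra.
  pose proof (pos_INR K). nra.
Qed.

End Construction.

Theorem lemma2p2 : forall eps : R, 0 < eps ->
  exists (a : nat -> bool) (N : nat -> nat),
    Rbar_le (Finite (1 - eps)) (LimInf_seq (avg a)) /\
    (forall m j : nat, (1 <= m)%nat -> (1 <= j)%nat -> has_zero_run a j (N m) m).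
Proof.
  intros eps Heps.
  destruct (INR_archimed eps 2 Heps) as [K HK].
  assert (K_pos : (1 <= K)%nat).
  { destruct K; [simpl in HK; lra | lia]. }
  exists (run_seq K), (fun m => 2 * period K m)%nat. split.
  - rewrite <- (LimInf_seq_const (1 - eps)). apply LimInf_le.
    exists 1%nat. intros n Hn. apply run_seq_avg; [exact K_pos | lra | lia].
  - intros m j Hm _. apply run_seq_has_zero_run; auto.
Qed.
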